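(* Let $u\le v$ in $S_n$ and let $I\subset[u,v]$ be a nonempty order ideal that is diamond-closed in $[u,v]$. Let $A_I$ be the set of atoms of $[u,v]$ (elements covering $u$) that lie in $I$. Then $I=\mathrm{dc}_{[u,v]}(\{u\}\cup A_I)$.
   Context: $S_n$ is the symmetric group with length $\ell$ (w.r.t. simple reflections $s_i=(i\ i{+}1)$), $T$ its transpositions. The Bruhat graph $\Gamma$ has vertex set $S_n$ and edges $w\to tw$ whenever $t\in T$, $\ell(w)<\ell(tw)$; Bruhat order is reachability in $\Gamma$. A diamond is a subgraph of $\Gamma$ with four distinct vertices $x_1,\dots,x_4$ and edges $x_1\to x_2\to x_4$, $x_1\to x_3\to x_4$. For $X\subset Y\subset S_n$, $X$ is diamond-closed in $Y$ if whenever $X$ contains three vertices of a diamond contained in $Y$ it contains the fourth. The diamond closure $\mathrm{dc}_Y(X)$ is the intersection of all sets $D$ with $X\subset D\subset Y$ that are diamond-closed in $Y$. *)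

From mathcomp Require Import all_boot all_fingroup.
Set Implicit Arguments. Unset Strict Implicit. Unset Printing Implicit Defensive.

Section Bruhat.
Variable n : nat.
Local Notation Sn := {perm 'I_n}.

(* Coxeter length of w w.r.t. simple reflections = number of inversions. *)
Definition len (w : Sn) : nat :=
  #|[set p : 'I_n * 'I_n | (p.1 < p.2) && (w p.2 < w p.1)]|.

Definition is_transposition (t : Sn) : bool :=
  [exists i : 'I_n, exists j : 'I_n, (i != j) && (t == tperm i j)].

(* Bruhat graph edge w -> t w.  In mathcomp, (w * t) x = t (w x), i.e. the
   function composition t o w, which is the product "t w" of the paper. *)
Definition bedge (w x : Sn) : bool :=
  [exists t : Sn, is_transposition t && (x == w * t)%g] && (len w < len x).

Definition bruhat_le (x y : Sn) : bool := connect bedge x y.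

Definition interval (u v : Sn) : {set Sn} := [set x | bruhat_le u x && bruhat_le x v].

Definition diamond (x1 x2 x3 x4 : Sn) : bool :=
  uniq [:: x1; x2; x3; x4] &&
  [&& bedge x1 x2, bedge x2 x4, bedge x1 x3 & bedge x3 x4].

Definition diamond_closed (Y X : {set Sn}) : bool :=
  [forall x1 : Sn, forall x2 : Sn, forall x3 : Sn, forall x4 : Sn,
    (diamond x1 x2 x3 x4 && [&& x1 \in Y, x2 \in Y, x3 \in Y & x4 \in Y]) ==>
    [&& (x2 \in X) && (x3 \in X) && (x4 \in X) ==> (x1 \in X),
        (x1 \in X) && (x3 \in X) && (x4 \in X) ==> (x2 \in X),
        (x1 \in X) && (x2 \in X) && (x4 \in X) ==> (x3 \in X) &
        (x1 \in X) && (x2 \in X) && (x3 \in X) ==> (x4 \in X)]].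

Definition dclosure (Y X : {set Sn}) : {set Sn} :=
  [set z | [forall D : {set Sn},
     [&& X \subset D, D \subset Y & diamond_closed Y D] ==> (z \in D)]].

Definition order_ideal_in (Y I : {set Sn}) : Prop :=
  I \subset Y /\ forall x y, x \in Y -> y \in I -> bruhat_le x y -> x \in I.

Definition covers (u x : Sn) : bool := bruhat_le u x && (len x == (len u).+1).

End Bruhat.

(* If D is diamond-closed in [u, v] and contains u and the atoms of I, then D
   contains I, by induction on length: an element x of I that is neither u nor
   an atom is the top of a diamond whose other vertices lie in [u, x], hence in
   I and in D.  Such a diamond exists because every two-step path q -> y -> x in
   the Bruhat graph of S_n admits a second middle vertex (a case analysis on how
   the two transpositions overlap), and a path from u to x has two final edges
   unless it is a single edge u -> x; that edge is not a cover, so it splits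
   into three edges.  Since I itself is such a D, it is the diamond closure. *)

From mathcomp Require Import all_boot all_fingroup zify.
Set Implicit Arguments. Unset Strict Implicit. Unset Printing Implicit Defensive.

Section BruhatGraph.
Variable n : nat.
Local Notation Sn := {perm 'I_n}.
Implicit Types (u v w x y z : Sn) (a b c d i j : 'I_n) (D I X Y : {set Sn}).

Definition inverted (f : 'I_n -> 'I_n) (p q : 'I_n) : bool := (p < q) && (f q < f p).

Lemma lenE w : len w = \sum_p \sum_q (inverted w p q : nat).
Proof.
rewrite /len -sum1_card big_mkcond /= pair_big /=.
by apply: eq_bigr => p _; rewrite inE /inverted; case: (_ && _).
Qed.

Lemma sumD2 (F : 'I_n -> nat) i j : i != j ->
  \sum_p F p = F i + F j + \sum_(p | (p != i) && (p != j)) F p.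
Proof.
move=> ij; rewrite (bigD1 i) //= (bigD1 j) /=; last by rewrite eq_sym.
by rewrite addnA; congr (_ + _); apply: eq_bigl => p; rewrite andbC.
Qed.

Lemma sum2D2 (F : 'I_n -> 'I_n -> nat) i j : i != j ->
  \sum_p \sum_q F p q = F i i + F i j + F j i + F j j +
    \sum_(q | (q != i) && (q != j)) (F i q + F j q + F q i + F q j) +
    \sum_(p | (p != i) && (p != j)) \sum_(q | (q != i) && (q != j)) F p q.
Proof.
move=> ij; under eq_bigr => p _ do rewrite (sumD2 (F p) ij).
by rewrite (sumD2 (fun p => F p i + F p j + _) ij) !big_split /=; lia.
Qed.

(* Inversions between a third position q and the swapped positions i < j
   (values A < B, value C at q) change only when q and C both lie in between. *)
Lemma swap_inversions3 (i j q A B C : nat) :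
  i < j -> A < B -> q != i -> q != j -> C != A -> C != B ->
  ((i < q) && (C < B)) + ((j < q) && (C < A)) + ((q < i) && (B < C)) + ((q < j) && (A < C)) =
  ((i < q) && (C < A)) + ((j < q) && (C < B)) + ((q < i) && (A < C)) + ((q < j) && (B < C)) +
  2 * ((i < q < j) && (A < C < B)).
Proof.
move=> *; case: (ltngtP i q); case: (ltngtP j q); case: (ltngtP C A);
  case: (ltngtP C B) => /=; lia.
Qed.

Lemma len_tpermM w i j : i < j -> w i < w j ->
  len (tperm i j * w)%g =
    len w + 1 + 2 * #|[set k : 'I_n | (i < k < j) && (w i < w k < w j)]|.
Proof.
move=> lt_ij lt_wij; have ij : i != j by rewrite -val_eqE /= neq_ltn lt_ij.
have wtpi : (tperm i j * w)%g i = w j by rewrite permM tpermL.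
have wtpj : (tperm i j * w)%g j = w i by rewrite permM tpermR.
have wtpk k : k != i -> k != j -> (tperm i j * w)%g k = w k.
  by move=> ki kj; rewrite permM tpermD // eq_sym.
have w_neq k l : k != l -> (w k : nat) != w l by move=> kl; rewrite val_eqE (inj_eq perm_inj).
rewrite !lenE !(sum2D2 _ ij).
have -> : \sum_(p | (p != i) && (p != j)) \sum_(q | (q != i) && (q != j))
            (inverted (tperm i j * w)%g p q : nat) =
          \sum_(p | (p != i) && (p != j)) \sum_(q | (q != i) && (q != j))
            (inverted w p q : nat).
  apply: eq_bigr => p /andP[pi pj]; apply: eq_bigr => q /andP[qi qj].
  by rewrite /inverted !wtpk.
have -> : #|[set k : 'I_n | (i < k < j) && (w i < w k < w j)]| =
          \sum_(q | (q != i) && (q != j)) ((i < q < j) && (w i < w q < w j) : nat).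
  rewrite -sum1_card big_mkcond /= (sumD2 _ ij) !inE !ltnn !andbF /= add0n.
  by apply: eq_bigr => q _; rewrite inE; case: (_ && _).
rewrite big_distrr /=; under eq_bigr => q /andP[qi qj].
  rewrite /inverted wtpi wtpj !wtpk // swap_inversions3 ?w_neq //.
  over.
rewrite big_split /= /inverted wtpi wtpj !ltnn /= lt_ij lt_wij.
by rewrite ltnNge (ltnW lt_ij) /=; lia.
Qed.

Lemma ltn_len_tpermM w i j : i != j ->
  (len w < len (tperm i j * w)%g) = ((i < j) == (w i < w j)).
Proof.
wlog lt_ij : i j / i < j.
  move=> wlog_ij ij; have [lt_ij|lt_ji] : i < j \/ j < i by apply/orP; rewrite -neq_ltn.
    exact: wlog_ij.
  have wij : (w i : nat) != w j by rewrite val_eqE (inj_eq perm_inj).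
  rewrite tpermC wlog_ij 1?eq_sym // lt_ji [i < j]ltnNge (ltnW lt_ji).
  by case: ltngtP wij.
move=> ij; rewrite lt_ij.
case: (ltngtP (w i) (w j)) => [lt_wij|lt_wji|/val_inj/perm_inj eq_ij].
- by rewrite len_tpermM //; lia.
- set x := (tperm i j * w)%g.
  have -> : w = (tperm i j * x)%g by rewrite mulgA tperm2 mul1g.
  rewrite len_tpermM ?permM ?tpermL ?tpermR //; lia.
- by rewrite eq_ij eqxx in ij.
Qed.

Lemma tpermMC (s : Sn) a b : (tperm a b * s = s * tperm (s a) (s b))%g.
Proof. by rewrite conjgC tpermJ. Qed.

Lemma tpermMtperm a b c : a != c -> b != c ->
  (tperm a b * tperm b c = tperm a c * tperm a b)%g.
Proof. by move=> ac bc; rewrite [RHS]tpermMC tpermL tpermD. Qed.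

Lemma mulg_tperm w a b : (w * tperm a b = tperm ((w^-1)%g a) ((w^-1)%g b) * w)%g.
Proof. by rewrite tpermMC !permKV. Qed.

Lemma permM_tpermV w a b c : ((w * tperm a b)^-1)%g c = (w^-1)%g (tperm a b c).
Proof. by rewrite invMg tpermV permM. Qed.

Lemma bedge_tpermE w a b : a != b ->
  bedge w (w * tperm a b)%g = (((w^-1)%g a < (w^-1)%g b) == (a < b)).
Proof.
move=> ab; rewrite /bedge; have is_tp : is_transposition (tperm a b).
  by apply/existsP; exists a; apply/existsP; exists b; rewrite ab eqxx.
have -> : [exists t, is_transposition t && (w * tperm a b == w * t)%g].
  by apply/existsP; exists (tperm a b); rewrite is_tp eqxx.
by rewrite [in len (w * _)%g]mulg_tperm ltn_len_tpermM ?(inj_eq perm_inj) // !permKV.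
Qed.

Lemma bedge_tperm x y : bedge x y -> exists a b, a != b /\ y = (x * tperm a b)%g.
Proof.
case/andP => /existsP[t /andP[/existsP[a /existsP[b /andP[ab /eqP ->]]] /eqP ->]] _.
by exists a, b.
Qed.

Lemma bedge_len x y : bedge x y -> len x < len y.
Proof. by case/andP. Qed.

Lemma mulg_tperm_neq w a b c d k :
  tperm a b k != tperm c d k -> (w * tperm a b != w * tperm c d)%g.
Proof. by apply: contraNneq => /mulgI ->. Qed.

(* pa, pb, pc are the positions of the values a, b, c; if swapping a, b and then
   b, c goes up twice, so does one of the other two factorisations of the 3-cycle. *)
Lemma orientation3 (a b c pa pb pc : nat) : a != b -> b != c -> a != c ->
  pa != pb -> pb != pc -> pa != pc ->
  (pa < pb) == (a < b) -> (pa < pc) == (b < c) ->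
  ((pa < pc) == (a < c)) && ((pc < pb) == (a < b)) ||
  ((pb < pc) == (b < c)) && ((pa < pb) == (a < c)).
Proof.
move=> *; case: (ltngtP a b); case: (ltngtP b c); case: (ltngtP a c);
  case: (ltngtP pa pb); case: (ltngtP pb pc); case: (ltngtP pa pc) => //=; lia.
Qed.

Lemma bedge2_diamond3 q a b c : a != b -> b != c -> a != c ->
  bedge q (q * tperm a b)%g -> bedge (q * tperm a b)%g (q * tperm a b * tperm b c)%g ->
  exists y, [/\ bedge q y, bedge y (q * tperm a b * tperm b c)%g & y != (q * tperm a b)%g].
Proof.
move=> ab bc ac; have ba : b != a by rewrite eq_sym.
have cb : c != b by rewrite eq_sym.
have ca : c != a by rewrite eq_sym.
rewrite !bedge_tpermE // !permM_tpermV tpermR tpermD // => E1 E2.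
have pos_neq d e : d != e -> ((q^-1)%g d : nat) != (q^-1)%g e.
  by move=> de; rewrite val_eqE (inj_eq perm_inj).
have [/andP[G1 G2]|/andP[G1 G2]] :=
  orP (orientation3 ab bc ac (pos_neq _ _ ab) (pos_neq _ _ bc) (pos_neq _ _ ac) E1 E2).
- exists (q * tperm a c)%g; split.
  + by rewrite bedge_tpermE.
  + by rewrite -mulgA tpermMtperm // mulgA bedge_tpermE // !permM_tpermV tpermL tpermD.
  + by apply: (@mulg_tperm_neq _ _ _ _ _ a); rewrite !tpermL.
- exists (q * tperm b c)%g; split.
  + by rewrite bedge_tpermE.
  + by rewrite -mulgA tpermMC tpermL tpermD // mulgA bedge_tpermE // !permM_tpermV tpermR tpermD.
  + by apply: (@mulg_tperm_neq _ _ _ _ _ c); rewrite tpermR tpermD.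
Qed.

Lemma bedge2_diamond q p x : bedge q p -> bedge p x ->
  exists y, [/\ bedge q y, bedge y x & y != p].
Proof.
move=> qp px; case/bedge_tperm: (qp) (px) => a [b [ab def_p]] /bedge_tperm[c [d [cd def_x]]].
subst p x; have [same|diff] := eqVneq (tperm c d) (tperm a b).
  by move: (bedge_len qp) (bedge_len px); rewrite same -mulgA tperm2 mulg1; lia.
have ba : b != a by rewrite eq_sym.
have dc : d != c by rewrite eq_sym.
case: (eqVneq c a) => [eq_ca|ca].
  subst c; have bd : b != d by apply: contraNneq diff => ->.
  by rewrite [tperm a b]tpermC in qp px *; apply: bedge2_diamond3.
case: (eqVneq c b) => [eq_cb|cb].
  subst c; have ad : a != d by apply: contraNneq diff => ->; rewrite tpermC.
  exact: bedge2_diamond3.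
case: (eqVneq d a) => [eq_da|da].
  subst d; have bc : b != c by rewrite eq_sym.
  by rewrite [tperm a b]tpermC [tperm c a]tpermC in qp px *; apply: bedge2_diamond3.
case: (eqVneq d b) => [eq_db|db].
  subst d; have ac : a != c by rewrite eq_sym.
  by rewrite [tperm c b]tpermC in qp px *; apply: bedge2_diamond3.
have [ac bc ad bd] : [/\ a != c, b != c, a != d & b != d] by rewrite !(eq_sym _ c, eq_sym _ d).
move: qp px; rewrite !bedge_tpermE // !permM_tpermV !tpermD // => qp px.
have -> : (q * tperm a b * tperm c d = q * tperm c d * tperm a b)%g.
  by rewrite -!mulgA tpermMC !tpermD.
exists (q * tperm c d)%g; split.
- by rewrite bedge_tpermE.
- by rewrite bedge_tpermE // !permM_tpermV !tpermD.
- by apply: (@mulg_tperm_neq _ _ _ _ _ a); rewrite tpermL tpermD.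
Qed.

(* Since the edge is not a cover, len_tpermM provides a value a < c < b placed
   between a and b, and u -> u (a c) -> u (a c)(a b) -> u (a c)(a b)(b c) = u (a b). *)
Lemma bedge_noncover_path3 u x : bedge u x -> len x != (len u).+1 ->
  exists z y, [/\ bedge u z, bedge z y & bedge y x].
Proof.
move=> ux; case/bedge_tperm: (ux) => a [b [ab def_x]]; subst x.
wlog lt_ab : a b ab ux / a < b.
  move=> wlog_ab; have [lt_ab|lt_ba] : a < b \/ b < a by apply/orP; rewrite -neq_ltn.
    exact: wlog_ab.
  by rewrite tpermC in ux *; apply: wlog_ab; rewrite // eq_sym.
move=> long; move: ux; rewrite bedge_tpermE // lt_ab => /eqP lt_ab_pos.
have := len_tpermM lt_ab_pos (_ : u ((u^-1)%g a) < u ((u^-1)%g b)).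
rewrite !permKV -mulg_tperm => /(_ lt_ab) len_x.
have : 0 < #|[set k : 'I_n | ((u^-1)%g a < k < (u^-1)%g b) && (a < u k < b)]|.
  by rewrite lt0n; apply: contraNneq long => A0; rewrite len_x A0 muln0 addn0 addn1.
rewrite card_gt0 => /set0Pn[k]; rewrite inE => /andP[/andP[lt_a_k lt_k_b] /andP[lt_ac lt_cb]].
set c := u k in lt_ac lt_cb; have pos_c : (u^-1)%g c = k by rewrite permK.
have ac : a != c by rewrite -val_eqE neq_ltn lt_ac.
have cb : c != b by rewrite -val_eqE neq_ltn lt_cb.
have [ca bc ba] : [/\ c != a, b != c & b != a] by split; rewrite eq_sym.
have -> : (u * tperm a b = u * tperm a c * tperm a b * tperm b c)%g.
  by rewrite -!mulgA tpermMtperm // (mulgA (tperm a c)) tperm2 mul1g.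
exists (u * tperm a c)%g, (u * tperm a c * tperm a b)%g; split.
- by rewrite bedge_tpermE // pos_c lt_ac lt_a_k.
- by rewrite bedge_tpermE // !permM_tpermV tpermL tpermD // pos_c lt_ab lt_k_b.
- rewrite bedge_tpermE // !permM_tpermV tpermR tpermL [tperm a b c]tpermD // tpermR pos_c.
  by rewrite ltnNge (ltnW lt_a_k) ltnNge (ltnW lt_cb).
Qed.

Lemma bruhat_le_last x y : bruhat_le x y -> x != y ->
  exists2 z, bruhat_le x z & bedge z y.
Proof.
case/connectP => p; elim/last_ind: p => [|p z _] /=; first by move=> _ ->; rewrite eqxx.
rewrite rcons_path last_rcons => /andP[xp zy] -> _.
by exists (last x p) => //; apply/connectP; exists p.
Qed.

Lemma diamondI z y1 y2 x : bedge z y1 -> bedge y1 x -> bedge z y2 -> bedge y2 x ->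
  y1 != y2 -> diamond z y1 y2 x.
Proof.
move=> zy1 y1x zy2 y2x y12; rewrite /diamond zy1 y1x zy2 y2x /= !inE !andbT.
have neq_len w w' : len w < len w' -> (w == w') = false.
  by move=> lt_ww'; apply: contraTF lt_ww' => /eqP ->; rewrite ltnn.
move: (bedge_len zy1) (bedge_len y1x) (bedge_len zy2) (bedge_len y2x) => *.
by rewrite (negbTE y12) !neq_len //; lia.
Qed.

Lemma noncover_diamond u x : bruhat_le u x -> x != u -> ~~ covers u x ->
  exists z y1 y2, bruhat_le u z /\ diamond z y1 y2 x.
Proof.
move=> ux xu ncov.
suff [q [y [uq qy yx]]] : exists q y, [/\ bruhat_le u q, bedge q y & bedge y x].
  have [y' [qy' y'x y'y]] := bedge2_diamond qy yx.
  by exists q, y, y'; split; last apply: diamondI; rewrite // eq_sym.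
rewrite eq_sym in xu; have [y uy yx] := bruhat_le_last ux xu.
have [eq_yu|yu] := eqVneq u y.
  subst y; have long : len x != (len u).+1 by move: ncov; rewrite /covers ux.
  have [z [y [uz zy yx']]] := bedge_noncover_path3 yx long.
  by exists z, y; split; first exact: connect1.
by have [q uq qy] := bruhat_le_last uy yu; exists q, y.
Qed.

Lemma diamond_closed_top Y D x1 x2 x3 x4 : diamond_closed Y D -> diamond x1 x2 x3 x4 ->
  [&& x1 \in Y, x2 \in Y, x3 \in Y & x4 \in Y] -> [&& x1 \in D, x2 \in D & x3 \in D] ->
  x4 \in D.
Proof.
move=> /forallP/(_ x1)/forallP/(_ x2)/forallP/(_ x3)/forallP/(_ x4) dcD dmd inY inD.
by move: dcD; rewrite dmd inY => /and4P[_ _ _ /implyP]; apply; rewrite -andbA.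
Qed.

Lemma order_ideal_sub_diamond_closed u v I D :
  order_ideal_in (interval u v) I -> diamond_closed (interval u v) D ->
  u \in D -> [set a in I | covers u a] \subset D -> I \subset D.
Proof.
move=> [IY Iid] dcD uD AD; apply/subsetP => x.
elim: {x}(len x).+1 {-2}x (ltnSn (len x)) => // k IH x lt_xk xI.
have := subsetP IY x xI; rewrite inE => /andP[ux xv].
have [-> //|xu] := eqVneq x u.
have [cov|ncov] := boolP (covers u x); first by apply: (subsetP AD); rewrite inE xI.
have [z [y1 [y2 [uz dmd]]]] := noncover_diamond ux xu ncov.
case/andP: (dmd) => _ /and4P[zy1 y1x zy2 y2x].
have in_interval w : bruhat_le u w -> bruhat_le w x -> w \in interval u v.
  by move=> uw wx; rewrite inE uw; apply: connect_trans wx xv.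
have inD w : bruhat_le u w -> bruhat_le w x -> len w < len x -> w \in D.
  move=> uw wx lt_wx; apply: IH (leq_trans lt_wx lt_xk) _.
  exact: Iid (in_interval w uw wx) xI wx.
have [le_y1x le_y2x] : bruhat_le y1 x /\ bruhat_le y2 x by split; apply: connect1.
have uy1 : bruhat_le u y1 := connect_trans uz (connect1 zy1).
have uy2 : bruhat_le u y2 := connect_trans uz (connect1 zy2).
have zx : bruhat_le z x := connect_trans (connect1 zy1) le_y1x.
move: (bedge_len y1x) (bedge_len y2x) => lt_y1x lt_y2x.
have lt_zx := ltn_trans (bedge_len zy1) lt_y1x.
apply: (diamond_closed_top dcD dmd); first by rewrite !in_interval //; apply: connect0.
by rewrite !inD.
Qed.

Lemma order_ideal_interval_bottom u v I : bruhat_le u v -> I != set0 ->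
  order_ideal_in (interval u v) I -> u \in I.
Proof.
move=> uv /set0Pn[y yI] [IY Iid]; have := subsetP IY y yI; rewrite inE => /andP[uy _].
by apply: (Iid u y) => //; rewrite inE uv andbT; apply: connect0.
Qed.

Lemma dclosure_eq Y X I : X \subset I -> I \subset Y -> diamond_closed Y I ->
  (forall D, X \subset D -> D \subset Y -> diamond_closed Y D -> I \subset D) ->
  dclosure Y X = I.
Proof.
move=> XI IY dcI minI; apply/setP => x; rewrite inE; apply/forallP/idP => [/(_ I)|xI D].
  by rewrite XI IY dcI.
by apply/implyP => /and3P[XD DY dcD]; apply: (subsetP (minI D XD DY dcD)).
Qed.

End BruhatGraph.

Theorem lemma4p2 (n : nat) (u v : {perm 'I_n}) (I : {set {perm 'I_n}}) :
  bruhat_le u v ->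
  I != set0 ->
  order_ideal_in (interval u v) I ->
  diamond_closed (interval u v) I ->
  I = dclosure (interval u v)
        (u |: [set a in I | covers u a]).
Proof.
move=> uv I0 ideal dcI; have uI := order_ideal_interval_bottom uv I0 ideal.
apply/esym/dclosure_eq => //.
- by apply/subsetP => x; rewrite !inE => /predU1P[-> | /andP[]].
- by case: ideal.
move=> D XD _ dcD; apply: order_ideal_sub_diamond_closed ideal dcD _ _.
  by apply: (subsetP XD); rewrite !inE eqxx.
exact: subset_trans (subsetUr _ _) XD.
Qed.
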